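(* Let $n\ge 1$ and $a\ge 2$ be integers and $r>0$. For $j\in\mathbb Z$ let $P_j$ be the point $\bigl(r\cos(2\pi j/n),\, r\sin(2\pi j/n)\bigr)$ on the circle of radius $r$ centered at the origin (so $P_j$ depends only on $j \bmod n$, and $P_0,\dots,P_{n-1}$ are $n$ equally spaced points on the circle). Then \[\sum_{k=0}^{n-1} |P_k P_{ak}| \;=\; 2rg\cot\left(\frac{\pi g}{2n}\right),\] where $|P_kP_{ak}|$ denotes the Euclidean distance between $P_k$ and $P_{ak}$, and $g=\gcd(a-1,n)$.
   Context: The sum counts, for each $k\in\{0,1,\dots,n-1\}$, the length of the segment joining point $k$ to point $ak \bmod n$; a segment may be counted twice (once from each endpoint) and degenerate segments (when $ak\equiv k \bmod n$) have length $0$. *)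

From Stdlib Require Import Reals Arith.
Open Scope R_scope.

Definition Px (r : R) (n j : nat) : R := r * cos (2 * PI * INR j / INR n).
Definition Py (r : R) (n j : nat) : R := r * sin (2 * PI * INR j / INR n).

Definition dist_pts (r : R) (n i j : nat) : R :=
  sqrt ((Px r n i - Px r n j) ^ 2 + (Py r n i - Py r n j) ^ 2).

Definition cot (x : R) : R := cos x / sin x.

(** The chord from [P_k] to [P_(a k)] has length [2 r |sin (pi (a-1) k / n)|].
    Write [n = g n'] and [a - 1 = g m'] with [m'] and [n'] coprime. As [k] runs
    over [0, n), the residue [m' k mod n'] runs [g] times through every residue
    modulo [n'], so the sum equals [2 r g] times [sum_(j < n') sin (pi j / n')],
    and multiplying that sum by [2 sin (pi / (2 n'))] makes it telescope to
    [2 cos (pi / (2 n'))]. *)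

From Stdlib Require Import Reals Arith Lra Lia List Permutation.
Open Scope R_scope.

Definition sumR (l : list R) : R := fold_right Rplus 0 l.

Lemma sumR_app (l1 l2 : list R) : sumR (l1 ++ l2) = sumR l1 + sumR l2.
Proof. induction l1 as [|x l1 IH]; simpl; [|rewrite IH]; lra. Qed.

Lemma sumR_Permutation (l1 l2 : list R) : Permutation l1 l2 -> sumR l1 = sumR l2.
Proof. induction 1; simpl; lra. Qed.

Lemma sumR_scal {A : Type} (c : R) (f : A -> R) (l : list A) :
  sumR (map (fun x => c * f x) l) = c * sumR (map f l).
Proof. induction l as [|x l IH]; simpl; [|rewrite IH]; lra. Qed.

Lemma sum_f_R0_sumR (f : nat -> R) (N : nat) :
  sum_f_R0 f N = sumR (map f (seq 0 (S N))).
Proof.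
  induction N as [|N IH]; [simpl; lra|].
  rewrite (seq_S (S N)), map_app, sumR_app; simpl sum_f_R0; rewrite IH; simpl; lra.
Qed.

Lemma map_seq_add {A : Type} (f : nat -> A) (s d l : nat) :
  map f (seq (s + d) l) = map (fun k => f (k + d)%nat) (seq s l).
Proof. revert s; induction l as [|l IH]; intro s; simpl; [|rewrite <- IH]; reflexivity. Qed.

Lemma sumR_periodic (F : nat -> R) (p : nat) :
  (forall k, F (k + p)%nat = F k) ->
  forall c, sumR (map F (seq 0 (c * p))) = INR c * sumR (map F (seq 0 p)).
Proof.
  intros HF.
  assert (Hshift : forall c k, F (k + c * p)%nat = F k).
  { intros c k; induction c as [|c IH]; [f_equal; lia|].
    replace (k + S c * p)%nat with (k + c * p + p)%nat by lia; now rewrite HF. }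
  intro c; induction c as [|c IH]; [simpl; lra|].
  replace (S c * p)%nat with (c * p + p)%nat by lia.
  rewrite seq_app, map_app, sumR_app, IH, map_seq_add.
  rewrite (map_ext (fun k => F (k + c * p)%nat) F) by apply Hshift.
  rewrite S_INR; lra.
Qed.

Lemma mul_mod_inj (m n k1 k2 : nat) : Nat.gcd m n = 1%nat ->
  (k1 <= k2 < n)%nat -> (m * k1) mod n = (m * k2) mod n -> k1 = k2.
Proof.
  intros Hcop Hk Hmod.
  assert (Hdiv : Nat.divide n (m * (k2 - k1))).
  { exists ((m * k2) / n - (m * k1) / n)%nat.
    pose proof (Nat.div_mod_eq (m * k1) n); pose proof (Nat.div_mod_eq (m * k2) n).
    assert (m * k1 <= m * k2)%nat by (apply Nat.mul_le_mono_l; lia).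
    rewrite Nat.mul_sub_distr_l, Nat.mul_sub_distr_r; nia. }
  apply Nat.gauss in Hdiv; [|now rewrite Nat.gcd_comm].
  destruct Hdiv as [[|q] Hq]; nia.
Qed.

Lemma Permutation_mul_mod (m n : nat) : Nat.gcd m n = 1%nat ->
  Permutation (map (fun k => (m * k) mod n) (seq 0 n)) (seq 0 n).
Proof.
  intro Hcop; destruct (Nat.eq_dec n 0) as [->|Hn]; [constructor|].
  apply NoDup_Permutation_bis.
  - apply FinFun.Injective_map_NoDup_in; [|apply seq_NoDup].
    intros x y Hx%in_seq Hy%in_seq Hxy.
    destruct (Nat.le_ge_cases x y).
    + apply (mul_mod_inj m n); auto; lia.
    + symmetry; apply (mul_mod_inj m n); auto; lia.
  - now rewrite length_map.
  - intros x (k & <- & _)%in_map_iff.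
    apply in_seq; pose proof (Nat.mod_upper_bound (m * k) n Hn); lia.
Qed.

Lemma sum_sin_telescope (th : R) (N : nat) :
  2 * sin (th / 2) * sumR (map (fun j => sin (INR j * th)) (seq 0 N))
  = cos (th / 2) - cos ((INR N - 1 / 2) * th).
Proof.
  induction N as [|N IH].
  - simpl; replace ((0 - 1 / 2) * th) with (- (th / 2)) by field; rewrite cos_neg; lra.
  - rewrite (seq_S N), map_app, sumR_app, Rmult_plus_distr_l, IH, S_INR; simpl.
    replace ((INR N - 1 / 2) * th) with (INR N * th - th / 2) by field.
    replace ((INR N + 1 - 1 / 2) * th) with (INR N * th + th / 2) by field.
    rewrite cos_minus, cos_plus; ring.
Qed.

Lemma sum_sin_PI_div (n : nat) : (0 < n)%nat ->
  sumR (map (fun j => sin (PI * INR j / INR n)) (seq 0 n)) = cot (PI / (2 * INR n)).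
Proof.
  intro Hn; assert (Hn1 : 1 <= INR n) by (apply (le_INR 1); lia).
  pose proof PI_RGT_0 as Hpi.
  set (th := PI / INR n).
  assert (Hsin : 0 < sin (th / 2)).
  { apply sin_gt_0; unfold th.
    - apply Rdiv_lt_0_compat; [apply Rdiv_lt_0_compat|]; lra.
    - apply Rmult_lt_reg_r with (2 * INR n); [lra|].
      replace (PI / INR n / 2 * (2 * INR n)) with PI by (field; lra); nra. }
  pose proof (sum_sin_telescope th n) as Htel.
  replace ((INR n - 1 / 2) * th) with (PI - th / 2) in Htel by (unfold th; field; lra).
  rewrite Rtrigo_facts.cos_pi_minus in Htel.
  rewrite (map_ext _ (fun j => sin (INR j * th))) by (intro j; unfold th; f_equal; field; lra).
  unfold cot; replace (PI / (2 * INR n)) with (th / 2) by (unfold th; field; lra).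
  apply Rmult_eq_reg_l with (2 * sin (th / 2)); [rewrite Htel; field|]; lra.
Qed.

Lemma chord_length (r x y : R) : 0 <= r ->
  sqrt ((r * cos x - r * cos y) ^ 2 + (r * sin x - r * sin y) ^ 2)
  = 2 * r * Rabs (sin ((x - y) / 2)).
Proof.
  intro Hr.
  assert (Hsq : (r * cos x - r * cos y) ^ 2 + (r * sin x - r * sin y) ^ 2
                = Rsqr (2 * r * sin ((x - y) / 2))).
  { assert (Hcos : cos (x - y) = cos (2 * ((x - y) / 2))) by (f_equal; field).
    rewrite cos_2a_sin, cos_minus in Hcos.
    pose proof (sin2_cos2 x); pose proof (sin2_cos2 y).
    unfold Rsqr in *; nra. }
  rewrite Hsq, sqrt_Rsqr_abs, !Rabs_mult, (Rabs_right 2), (Rabs_right r); lra.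
Qed.

(* No hypothesis on [n]: for [n = 0] both sides vanish, since [/ 0 = 0]. *)
Lemma dist_pts_sub (r : R) (n i j : nat) : 0 <= r -> (i <= j)%nat ->
  dist_pts r n i j = 2 * r * Rabs (sin (PI * INR (j - i) / INR n)).
Proof.
  intros Hr Hij; unfold dist_pts, Px, Py; rewrite chord_length by exact Hr.
  rewrite minus_INR by exact Hij.
  replace ((2 * PI * INR i / INR n - 2 * PI * INR j / INR n) / 2)
    with (- (PI * (INR j - INR i) / INR n)) by (unfold Rdiv; lra).
  now rewrite sin_neg, Rabs_Ropp.
Qed.

Lemma Rabs_sin_PI_div_mod (t n : nat) : (0 < n)%nat ->
  Rabs (sin (PI * INR t / INR n)) = sin (PI * INR (t mod n) / INR n).
Proof.
  intro Hn; assert (Hn1 : 1 <= INR n) by (apply (le_INR 1); lia).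
  pose proof PI_RGT_0 as Hpi.
  assert (Hshift : forall x q, Rabs (sin (x + INR q * PI)) = Rabs (sin x)).
  { intros x q; induction q as [|q IH]; [now rewrite Rmult_0_l, Rplus_0_r|].
    replace (x + INR (S q) * PI) with (x + INR q * PI + PI) by (rewrite S_INR; ring).
    now rewrite neg_sin, Rabs_Ropp. }
  rewrite (Nat.div_mod_eq t n) at 1; rewrite plus_INR, mult_INR.
  replace (PI * (INR n * INR (t / n) + INR (t mod n)) / INR n)
    with (PI * INR (t mod n) / INR n + INR (t / n) * PI) by (field; lra).
  rewrite Hshift, Rabs_right; [reflexivity|].
  pose proof (Nat.mod_upper_bound t n ltac:(lia)) as Hlt%Nat.lt_le_incl%le_INR.
  apply Rle_ge, sin_ge_0.
  - apply Rmult_le_pos; [apply Rmult_le_pos; [lra|apply pos_INR]|].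
    apply Rlt_le, Rinv_0_lt_compat; lra.
  - apply Rmult_le_reg_r with (INR n); [lra|].
    replace (PI * INR (t mod n) / INR n * INR n) with (PI * INR (t mod n)) by (field; lra).
    nra.
Qed.

Lemma dist_pts_mul (r : R) (g n m k : nat) : 0 <= r -> (0 < g)%nat -> (0 < n)%nat ->
  dist_pts r (g * n) k ((g * m + 1) * k)
  = 2 * r * sin (PI * INR ((m * k) mod n) / INR n).
Proof.
  intros Hr Hg Hn; rewrite dist_pts_sub by (auto; nia).
  rewrite <- Rabs_sin_PI_div_mod by exact Hn.
  replace ((g * m + 1) * k - k)%nat with (g * (m * k))%nat by nia.
  assert (0 < INR g) by (apply lt_0_INR; lia); assert (0 < INR n) by (apply lt_0_INR; lia).
  rewrite !mult_INR.
  replace (PI * (INR g * (INR m * INR k)) / (INR g * INR n))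
    with (PI * (INR m * INR k) / INR n) by (field; lra).
  reflexivity.
Qed.

Lemma sum_sin_mul_mod (m n c : nat) : Nat.gcd m n = 1%nat -> (0 < n)%nat ->
  sumR (map (fun k => sin (PI * INR ((m * k) mod n) / INR n)) (seq 0 (c * n)))
  = INR c * cot (PI / (2 * INR n)).
Proof.
  intros Hcop Hn; rewrite sumR_periodic.
  - rewrite <- (map_map (fun k => (m * k) mod n) (fun j => sin (PI * INR j / INR n))).
    rewrite (sumR_Permutation _ _ (Permutation_map _ (Permutation_mul_mod m n Hcop))).
    now rewrite sum_sin_PI_div.
  - intro k; now rewrite Nat.mul_add_distr_l, Nat.Div0.mod_add.
Qed.

Theorem theorem1 (n a : nat) (r : R) :
  (1 <= n)%nat -> (2 <= a)%nat -> 0 < r ->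
  sum_f_R0 (fun k => dist_pts r n k (a * k)) (n - 1) =
  2 * r * INR (Nat.gcd (a - 1) n) * cot (PI * INR (Nat.gcd (a - 1) n) / (2 * INR n)).
Proof.
  intros Hn Ha Hr.
  set (g := Nat.gcd (a - 1) n).
  assert (Hg : (0 < g)%nat).
  { apply Nat.neq_0_lt_0; intros Hg%Nat.gcd_eq_0; lia. }
  destruct (Nat.gcd_divide_l (a - 1) n) as [m Hm].
  destruct (Nat.gcd_divide_r (a - 1) n) as [n' Hn'].
  fold g in Hm, Hn'.
  assert (Hcop : Nat.gcd m n' = 1%nat).
  { pose proof (Nat.gcd_div_gcd (a - 1) n g ltac:(lia) eq_refl) as Hcop.
    now rewrite Hm, Hn', !Nat.div_mul in Hcop by lia. }
  assert (Hn'0 : (0 < n')%nat) by nia.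
  assert (Ha' : a = (g * m + 1)%nat) by lia.
  rewrite sum_f_R0_sumR; replace (S (n - 1)) with n by lia.
  rewrite Hn', Nat.mul_comm, Ha'.
  rewrite (map_ext _ (fun k => 2 * r * sin (PI * INR ((m * k) mod n') / INR n')))
    by (intro k; apply dist_pts_mul; lra || lia).
  rewrite sumR_scal, sum_sin_mul_mod by assumption.
  assert (Hg_pos : 0 < INR g) by (apply lt_0_INR; lia).
  rewrite mult_INR; replace (PI * INR g / (2 * (INR g * INR n'))) with (PI / (2 * INR n'))
    by (field; split; lra || (apply not_0_INR; lia)).
  ring.
Qed.
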